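(* Let $i:B\to S$ be a ring homomorphism such that the functor $S\otimes_B-:{}_B\mathrm{Mod}\to{}_S\mathrm{Mod}$ is comonadic. Then $\Gamma:I^l_B(S)\to\mathrm{End}_{\mathrm{cor}}(S\otimes_BS)$ is an isomorphism of monoids.
   Context: $S$ is a $B$-bimodule via $i$. Sweedler coring $S\otimes_BS$: $S$-bimodule with comultiplication $s\otimes s'\mapsto s\otimes1\otimes s'$ and counit $s\otimes s'\mapsto ss'$; $\mathrm{End}_{\mathrm{cor}}(S\otimes_BS)$ is the monoid under composition of $S$-bimodule endomorphisms compatible with comultiplication and counit. Left $S\otimes_BS$-comodules: pairs $(Y,\theta_Y)$, $Y$ a left $S$-module, $\theta_Y:Y\to S\otimes_BY$ left $S$-linear with $\alpha_Y\theta_Y=\mathrm{id}$ ($\alpha_Y(s\otimes y)=sy$) and $(S\otimes_B\theta_Y)\theta_Y=(S\otimes_B\eta_Y)\theta_Y$, $\eta_Y(y)=1\otimes_By$. $S\otimes_B-$ is comonadic if the comparison functor $K_S(X)=(S\otimes_BX,S\otimes_B\eta_X)$ from ${}_B\mathrm{Mod}$ to left $S\otimes_BS$-comodules is an equivalence. $I_B(S)$: monoid of $B$-subbimodules of $S$ with product $IJ=\{\sum_kx_ky_k\}$ (finite sums), unit $i(B)$. $I^l_B(S)$: submonoid of those $I$ with $\mathbf m^l_I:S\otimes_BI\to S$, $s\otimes x\mapsto sx$, an isomorphism. $\Gamma(I)=(S\otimes_B\mu_I)\circ((\mathbf m^l_I)^{-1}\otimes_BS):S\otimes_BS\to S\otimes_BI\otimes_BS\to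 S\otimes_BS$, with $\mu_I:I\otimes_BS\to S$ multiplication. *)

(* This is exactly equality in the tensor product. *)
From HB Require Import structures.
From mathcomp Require Import all_boot all_order all_algebra.
From Stdlib Require Import ClassicalEpsilon.
Set Implicit Arguments. Unset Strict Implicit. Unset Printing Implicit Defensive.
Import GRing.Theory.
Local Open Scope ring_scope.

Section Tensor.
Variables (R : pzRingType) (M N : Type).
Variables (addM : M -> M -> M) (addN : N -> N -> N).
Variables (ract : M -> R -> M) (lact : R -> N -> N).

Definition balanced (A : zmodType) (f : M -> N -> A) : Prop :=
  [/\ forall m1 m2 n, f (addM m1 m2) n = f m1 n + f m2 n,
      forall m n1 n2, f m (addN n1 n2) = f m n1 + f m n2 &
      forall m r n, f (ract m r) n = f m (lact r n)].

Definition tsum (A : zmodType) (f : M -> N -> A) (t : seq (M * N)) : A :=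
  \sum_(p <- t) f p.1 p.2.

(* t1 = t2 in M (x)_R N *)
Definition teq (t1 t2 : seq (M * N)) : Prop :=
  forall (A : zmodType) (f : M -> N -> A), balanced f -> tsum f t1 = tsum f t2.
End Tensor.

Section Sweedler.
Variables (B S : pzRingType) (i : {rmorphism B -> S}).

Definition rS (s : S) (b : B) : S := s * i b.

Definition teqB (N : Type) (addN : N -> N -> N) (lact : B -> N -> N) :=
  @teq B S N +%R addN rS lact.

Definition teqX (X : lmodType B) :=
  teqB (+%R : X -> X -> X) (fun b x => b *: x).
Definition teqY (Y : lmodType S) :=
  teqB (+%R : Y -> Y -> Y) (fun b y => i b *: y).
Definition teqSS := teqB (+%R : S -> S -> S) (fun b s => i b * s).

Definition balanced3 (N : Type) (addN : N -> N -> N) (lact : B -> N -> N)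
    (A : zmodType) (f : S -> S -> N -> A) : Prop :=
  [/\ forall a a' u n, f (a + a') u n = f a u n + f a' u n,
      forall a u u' n, f a (u + u') n = f a u n + f a u' n,
      forall a u n n', f a u (addN n n') = f a u n + f a u n',
      forall a b u n, f (a * i b) u n = f a (i b * u) n &
      forall a u b n, f a (u * i b) n = f a u (lact b n)].

Definition tsum3 (N : Type) (A : zmodType) (f : S -> S -> N -> A)
    (t : seq (S * S * N)) : A :=
  \sum_(p <- t) f p.1.1 p.1.2 p.2.

Definition teq3 (N : Type) (addN : N -> N -> N) (lact : B -> N -> N)
    (t1 t2 : seq (S * S * N)) : Prop :=
  forall (A : zmodType) (f : S -> S -> N -> A),
    balanced3 addN lact f -> tsum3 f t1 = tsum3 f t2.

Definition teq3X (X : lmodType B) :=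
  teq3 (+%R : X -> X -> X) (fun b x => b *: x).
Definition teq3Y (Y : lmodType S) :=
  teq3 (+%R : Y -> Y -> Y) (fun b y => i b *: y).
Definition teq3SS := teq3 (+%R : S -> S -> S) (fun b s => i b * s).

Definition lscale (T : Type) (s : S) (t : seq (S * T)) : seq (S * T) :=
  [seq (s * p.1, p.2) | p <- t].
Definition rscale (t : seq (S * S)) (s : S) : seq (S * S) :=
  [seq (p.1, p.2 * s) | p <- t].
Definition tmap (T U : Type) (g : T -> U) (t : seq (S * T)) : seq (S * U) :=
  [seq (p.1, g p.2) | p <- t].
(* S (x)_B eta : S (x)_B T -> S (x)_B S (x)_B T, s (x) x |-> s (x) 1 (x) x *)
Definition Seta (T : Type) (t : seq (S * T)) : seq (S * S * T) :=
  [seq (p.1, 1, p.2) | p <- t].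
Definition Stheta (T U : Type) (th : T -> seq (S * U)) (t : seq (S * T))
  : seq (S * S * U) :=
  flatten [seq [seq (p.1, q.1, q.2) | q <- th p.2] | p <- t].
(* S (x)_B G for G : S (x)_B T -> S (x)_B U, on S (x)_B (S (x)_B T) *)
Definition SG (T U : Type) (G : seq (S * T) -> seq (S * U))
    (t : seq (S * S * T)) : seq (S * S * U) :=
  flatten [seq [seq (p.1.1, q.1, q.2) | q <- G [:: (p.1.2, p.2)]] | p <- t].
Definition alpha (Y : lmodType S) (t : seq (S * Y)) : Y :=
  \sum_(p <- t) p.1 *: p.2.

Definition is_comodule (Y : lmodType S) (th : Y -> seq (S * Y)) : Prop :=
  [/\
      forall s y z, teqY (th (s *: y + z)) (lscale s (th y) ++ th z),
      forall y, alpha (th y) = y &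
      forall y, teq3Y (Stheta th (th y)) (Seta (th y))].

(* a comodule morphism K_S(X) -> K_S(X') : a well-defined, left S-linear map
   G : S (x)_B X -> S (x)_B X' with (S (x) eta) G = (S (x) G)(S (x) eta) *)
Definition KK_morph (X X' : lmodType B) (G : seq (S * X) -> seq (S * X'))
  : Prop :=
  [/\ forall t1 t2, teqX t1 t2 -> teqX (G t1) (G t2),
      forall s t t', teqX (G (lscale s t ++ t')) (lscale s (G t) ++ G t') &
      forall t, teq3X (Seta (G t)) (SG G (Seta t))].

(* a comodule isomorphism K_S(X) -> (Y, theta) (a bijective comodule
   morphism psi : S (x)_B X -> Y) *)
Definition KY_iso (X : lmodType B) (Y : lmodType S) (th : Y -> seq (S * Y))
    (psi : seq (S * X) -> Y) : Prop :=
  [/\ forall t1 t2, teqX t1 t2 -> psi t1 = psi t2,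
      forall s t t', psi (lscale s t ++ t') = s *: psi t + psi t',
      forall t, teqY (th (psi t)) [seq (p.1, psi [:: (1, p.2)]) | p <- t],
      forall t1 t2, psi t1 = psi t2 -> teqX t1 t2 &
      forall y, exists t, psi t = y].

(* S (x)_B - is comonadic: the comparison functor
   K_S(X) = (S (x)_B X, S (x)_B eta_X) is an equivalence, i.e. it is
   faithful, full and essentially surjective. *)
Definition comonadic : Prop :=
  [/\
      forall (X X' : lmodType B) (f g : X -> X'), linear f -> linear g ->
        (forall t, teqX (tmap f t) (tmap g t)) -> f =1 g,
      forall (X X' : lmodType B) (G : seq (S * X) -> seq (S * X')),
        KK_morph G ->
        exists f : X -> X', linear f /\ forall t, teqX (G t) (tmap f t) &
      forall (Y : lmodType S) (th : Y -> seq (S * Y)), is_comodule th ->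
        exists (X : lmodType B) (psi : seq (S * X) -> Y), KY_iso th psi].

Definition is_subbimod (P : S -> Prop) : Prop :=
  [/\ P 0,
      forall x y, P x -> P y -> P (x + y),
      forall x, P x -> P (- x),
      forall b x, P x -> P (i b * x) &
      forall b x, P x -> P (x * i b)].

Definition prodI (P Q : S -> Prop) : S -> Prop := fun z =>
  exists t : seq (S * S), (forall p, List.In p t -> P p.1 /\ Q p.2) /\
                          z = \sum_(p <- t) p.1 * p.2.
Definition unitI : S -> Prop := fun z => exists b, z = i b.

(* S (x)_B I : formal sums with second components in I, modulo the balanced
   biadditive maps S x I -> A *)
Definition inI (P : S -> Prop) (t : seq (S * S)) : Prop :=
  forall p, List.In p t -> P p.2.
Definition balancedI (P : S -> Prop) (A : zmodType) (f : S -> S -> A) : Prop :=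
  [/\ forall a a' x, P x -> f (a + a') x = f a x + f a' x,
      forall a x y, P x -> P y -> f a (x + y) = f a x + f a y &
      forall a b x, P x -> f (a * i b) x = f a (i b * x)].
Definition teqI (P : S -> Prop) (t1 t2 : seq (S * S)) : Prop :=
  forall (A : zmodType) (f : S -> S -> A), balancedI P f ->
    tsum f t1 = tsum f t2.

Definition mult (t : seq (S * S)) : S := \sum_(p <- t) p.1 * p.2.

(* I is in I^l_B(S) : m^l_I is an isomorphism *)
Definition in_Il (P : S -> Prop) : Prop :=
  (forall t1 t2, inI P t1 -> inI P t2 -> mult t1 = mult t2 -> teqI P t1 t2) /\
  (forall s, exists t, inI P t /\ mult t = s).

Definition minv (P : S -> Prop) (s : S) : seq (S * S) :=
  epsilon (inhabits [::]) (fun t => inI P t /\ mult t = s).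

(* Gamma(I) = (S (x) mu_I) o ((m^l_I)^{-1} (x) S) on S (x)_B S:
   s (x) s' |-> sum_k a_k (x) x_k s'  where (m^l_I)^{-1}(s) = sum_k a_k (x) x_k *)
Definition Gamma (P : S -> Prop) (t : seq (S * S)) : seq (S * S) :=
  flatten [seq [seq (q.1, q.2 * p.2) | q <- minv P p.1] | p <- t].

Definition eps (t : seq (S * S)) : S := \sum_(p <- t) p.1 * p.2.
Definition Delta (t : seq (S * S)) : seq (S * S * S) := Seta t.
(* F (x)_S F, transported to S (x)_B S (x)_B S along
   (S (x)_B S) (x)_S (S (x)_B S) ~= S (x)_B S (x)_B S,
   (a (x) u) (x)_S (v (x) c) |-> a (x) uv (x) c *)
Definition FF (F : seq (S * S) -> seq (S * S)) (t : seq (S * S * S))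
  : seq (S * S * S) :=
  flatten [seq [seq (p.1, p.2 * q.1, q.2)
               | p <- F [:: (r.1.1, r.1.2)], q <- F [:: (1, r.2)]] | r <- t].

Definition End_cor (F : seq (S * S) -> seq (S * S)) : Prop :=
  [/\
      forall t1 t2, teqSS t1 t2 -> teqSS (F t1) (F t2),
      forall s t t', teqSS (F (lscale s t ++ t')) (lscale s (F t) ++ F t'),
      forall t s, teqSS (F (rscale t s)) (rscale (F t) s),
      forall t, eps (F t) = eps t &
      forall t, teq3SS (Delta (F t)) (FF F (Delta t))].

Definition eqEnd (F G : seq (S * S) -> seq (S * S)) : Prop :=
  forall t, teqSS (F t) (G t).

End Sweedler.

From HB Require Import structures.
From mathcomp Require Import all_boot all_order all_algebra.
From mathcomp Require boolp.
From Stdlib Require Import ClassicalEpsilon ProofIrrelevance FunctionalExtensionality PropExtensionality.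
Set Implicit Arguments. Unset Strict Implicit. Unset Printing Implicit Defensive.
Import GRing.Theory.
Local Open Scope ring_scope.

(* For I in I^l_B(S), Gamma(I) sends s (x) s' to sum_k a_k (x) x_k s', where
   s = sum_k a_k x_k with a_k in S, x_k in I; since S (x)_B I ~= S this is
   well defined, and one checks directly that Gamma(I) is a coring map, that
   Gamma(i(B)) = id and that Gamma(IJ) = Gamma(I) Gamma(J).
   Injectivity: Gamma(I) fixes x (x) 1 for x in I, so if Gamma(I) = Gamma(J)
   then S (x)_B - kills the B-linear map B -> S/J, b |-> b x; faithfulness
   forces x in J.
   Surjectivity: a coring endomorphism F makes S a comodule with coaction
   s |-> F(s (x) 1), hence (essential surjectivity) S ~= S (x)_B X as comodules
   via some psi.  Fullness shows that I_F = {x | F(x (x) 1) = 1 (x) x} is the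
   image of X -> S, x |-> psi(1 (x) x), so that S (x)_B I_F ~= S (x)_B X ~= S
   and I_F is in I^l_B(S); finally Gamma(I_F) = F. *)

Section FormalSums.
Variables (M N : Type) (A : zmodType) (f : M -> N -> A).

Lemma tsum_cat t t' : tsum f (t ++ t') = tsum f t + tsum f t'.
Proof. by rewrite /tsum big_cat. Qed.

Lemma tsum_seq1 p : tsum f [:: p] = f p.1 p.2.
Proof. by rewrite /tsum big_seq1. Qed.

End FormalSums.

Section Scaling.
Variable S : pzRingType.

Lemma lscale1 (T : Type) (t : seq (S * T)) : lscale 1 t = t.
Proof. by elim: t => [|[a b] t IH] //=; rewrite mul1r IH. Qed.

Lemma tsum_lscale (T : Type) (A : zmodType) (f : S -> T -> A) a t :
  tsum f (lscale a t) = tsum (fun m n => f (a * m) n) t.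
Proof. by rewrite /tsum /lscale big_map. Qed.

Lemma tsum_rscale (A : zmodType) (f : S -> S -> A) t s :
  tsum f (rscale t s) = tsum (fun m n => f m (n * s)) t.
Proof. by rewrite /tsum /rscale big_map. Qed.

End Scaling.

Section Membership.
Variable S : pzRingType.
Implicit Types (P : S -> Prop) (u v : seq (S * S)).

Lemma In_mem (T : eqType) (x : T) s : x \in s -> List.In x s.
Proof.
elim: s => [|y s IH] //; rewrite in_cons => /orP [/eqP ->|/IH H]; by [left|right].
Qed.

Lemma inI_cons P p u : inI P (p :: u) <-> P p.2 /\ inI P u.
Proof.
split; first by move=> H; split; [apply: H; left | move=> q Hq; apply: H; right].
by case=> H1 H2 q [<-|Hq] //; apply: H2.
Qed.

Lemma inI_seq1 P p : P p.2 -> inI P [:: p].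
Proof. by move=> Hp; apply/inI_cons; split=> // q []. Qed.

Lemma inI_cat P u v : inI P u -> inI P v -> inI P (u ++ v).
Proof.
elim: u => [|p u IH] //= /inI_cons [Hp Hu] Hv.
by apply/inI_cons; split; last exact: IH.
Qed.

Lemma inI_map P (T : Type) (F : T -> S * S) s :
  (forall x, List.In x s -> P (F x).2) -> inI P (map F s).
Proof. by move=> H p /List.in_map_iff [x [<- Hx]]; apply: H. Qed.

Lemma mult_cat u v : mult (u ++ v) = mult u + mult v.
Proof. by rewrite /mult big_cat. Qed.

End Membership.

Section Balanced.
Variables (B S : pzRingType) (i : {rmorphism B -> S}).

Definition balancedSS (A : zmodType) (f : S -> S -> A) :=
  [/\ forall m1 m2 n, f (m1 + m2) n = f m1 n + f m2 n,
      forall m n1 n2, f m (n1 + n2) = f m n1 + f m n2 &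
      forall m r n, f (m * i r) n = f m (i r * n)].

Variables (A : zmodType) (f : S -> S -> A) (Hf : balancedSS f).

Lemma balancedSS_0l n : f 0 n = 0.
Proof.
have [H _ _] := Hf; have E := H 0 0 n; rewrite addr0 in E.
by apply: (@addrI _ (f 0 n)); rewrite addr0 -E.
Qed.

Lemma balancedSS_0r m : f m 0 = 0.
Proof.
have [_ H _] := Hf; have E := H m 0 0; rewrite addr0 in E.
by apply: (@addrI _ (f m 0)); rewrite addr0 -E.
Qed.

Lemma balancedSS_sumr (I : Type) (s : seq I) (F : I -> S) m :
  f m (\sum_(x <- s) F x) = \sum_(x <- s) f m (F x).
Proof. by have [_ H _] := Hf; apply: (big_morph (f m) (H m) (balancedSS_0r m)). Qed.

Lemma balancedSS_lmul a : balancedSS (fun m n => f (a * m) n).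
Proof.
have [H1 H2 H3] := Hf.
by split=> *; [rewrite mulrDr H1 | rewrite H2 | rewrite mulrA H3].
Qed.

Lemma balancedSS_rmul c : balancedSS (fun m n => f m (n * c)).
Proof.
have [H1 H2 H3] := Hf.
by split=> *; [rewrite H1 | rewrite mulrDl H2 | rewrite H3 mulrA].
Qed.

End Balanced.

Section Subbimodule.
Variables (B S : pzRingType) (i : {rmorphism B -> S}) (P : S -> Prop).
Hypothesis HP : is_subbimod i P.

Lemma subbimod0 : P 0. Proof. by case: HP. Qed.

Lemma subbimodD x y : P x -> P y -> P (x + y).
Proof. by case: HP => _ H _ _ _; apply: H. Qed.

Lemma subbimodN x : P x -> P (- x).
Proof. by case: HP => _ _ H _ _; apply: H. Qed.

Lemma subbimodMl b x : P x -> P (i b * x).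
Proof. by case: HP => _ _ _ H _; apply: H. Qed.

Lemma subbimodMr b x : P x -> P (x * i b).
Proof. by case: HP => _ _ _ _ H; apply: H. Qed.

End Subbimodule.

Section TensorSS.
Variables (B S : pzRingType) (i : {rmorphism B -> S}).
Implicit Types t : seq (S * S).

Lemma teqSS_sym t1 t2 : teqSS i t1 t2 -> teqSS i t2 t1.
Proof. by move=> H A f Hf; rewrite (H A f Hf). Qed.

Lemma teqSS_trans t1 t2 t3 : teqSS i t1 t2 -> teqSS i t2 t3 -> teqSS i t1 t3.
Proof. by move=> H H' A f Hf; rewrite (H A f Hf) (H' A f Hf). Qed.

Lemma teqSS_lscale a t1 t2 : teqSS i t1 t2 -> teqSS i (lscale a t1) (lscale a t2).
Proof.
by move=> H A f Hf; rewrite !tsum_lscale (H _ _ (balancedSS_lmul Hf a)).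
Qed.

End TensorSS.

Section GammaDef.
Variables (B S : pzRingType) (i : {rmorphism B -> S}).

Lemma sum_Gamma (P : S -> Prop) (A : zmodType) (F : S * S -> A) t :
  \sum_(a <- Gamma P t) F a =
  \sum_(p <- t) \sum_(q <- minv P p.1) F (q.1, q.2 * p.2).
Proof.
by rewrite /Gamma big_flatten /= big_map; apply: eq_bigr => p _; rewrite big_map.
Qed.

Variables (P : S -> Prop) (HP : is_subbimod i P) (HIl : in_Il i P).

Lemma minvP s : inI P (minv P s) /\ mult (minv P s) = s.
Proof.
apply: (epsilon_spec (inhabits [::]) (fun t => inI P t /\ mult t = s)).
by case: HIl => _ /(_ s).
Qed.

Lemma teqI_mult (A : zmodType) (f : S -> S -> A) u1 u2 : inI P u1 -> inI P u2 ->
  mult u1 = mult u2 -> balancedI i P f -> tsum f u1 = tsum f u2.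
Proof. by case: HIl => H _ h1 h2 hm; apply: H. Qed.

Lemma balancedI_rmul (A : zmodType) (g : S -> S -> A) c :
  balancedSS i g -> balancedI i P (fun a x => g a (x * c)).
Proof.
case=> H1 H2 H3.
by split=> *; [rewrite H1 | rewrite mulrDl H2 | rewrite H3 mulrA].
Qed.

Definition Gamma_form (A : zmodType) (g : S -> S -> A) s s' :=
  \sum_(q <- minv P s) g q.1 (q.2 * s').

Lemma tsum_Gamma (A : zmodType) (g : S -> S -> A) t :
  tsum g (Gamma P t) = tsum (Gamma_form g) t.
Proof. by rewrite /tsum sum_Gamma. Qed.

Variables (A : zmodType) (g : S -> S -> A) (Hg : balancedSS i g).

Lemma Gamma_formE s s' u : inI P u -> mult u = s ->
  Gamma_form g s s' = \sum_(q <- u) g q.1 (q.2 * s').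
Proof.
move=> Hu Hm; have [H1 H2] := minvP s.
by apply: (teqI_mult H1 Hu _ (balancedI_rmul s' Hg)); rewrite H2.
Qed.

Lemma balancedSS_Gamma_form : balancedSS i (Gamma_form g).
Proof.
have [H1 H2 H3] := Hg; split.
- move=> s1 s2 n; have [a1 b1] := minvP s1; have [a2 b2] := minvP s2.
  rewrite (@Gamma_formE _ _ (minv P s1 ++ minv P s2)) ?big_cat //.
    exact: inI_cat.
  by rewrite mult_cat b1 b2.
- by move=> m n1 n2; rewrite /Gamma_form -big_split; apply: eq_bigr => q _; rewrite mulrDr H2.
- move=> m r n; have [a1 b1] := minvP m.
  rewrite (@Gamma_formE _ _ [seq (q.1, q.2 * i r) | q <- minv P m]).
  + by rewrite big_map /Gamma_form; apply: eq_bigr => q _ /=; rewrite mulrA.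
  + by apply: inI_map => x Hx /=; exact: (subbimodMr HP r (a1 x Hx)).
  + rewrite -[in RHS]b1 /mult mulr_suml big_map.
    by apply: eq_bigr => q _ /=; rewrite mulrA.
Qed.

End GammaDef.

Section GammaCoring.
Variables (B S : pzRingType) (i : {rmorphism B -> S}).
Variables (P : S -> Prop) (HP : is_subbimod i P) (HIl : in_Il i P).
Implicit Types t : seq (S * S).

Lemma Gamma_teqSS t1 t2 : teqSS i t1 t2 -> teqSS i (Gamma P t1) (Gamma P t2).
Proof.
by move=> H A g Hg; rewrite !tsum_Gamma; apply: H _ _ (balancedSS_Gamma_form HP HIl Hg).
Qed.

Lemma Gamma_lscale s t t' :
  teqSS i (Gamma P (lscale s t ++ t')) (lscale s (Gamma P t) ++ Gamma P t').
Proof.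
move=> A g Hg; rewrite tsum_Gamma !tsum_cat tsum_Gamma !tsum_lscale tsum_Gamma.
congr (_ + _); apply: eq_bigr => p _ /=; have [a1 b1] := minvP HIl p.1.
rewrite (@Gamma_formE _ _ _ _ HIl _ _ Hg _ _ (lscale s (minv P p.1))).
- by rewrite /lscale big_map.
- by apply: inI_map => x Hx /=; apply: a1.
- rewrite -[in RHS]b1 /mult /lscale big_map mulr_sumr.
  by apply: eq_bigr => q _; rewrite mulrA.
Qed.

Lemma Gamma_rscale t s : teqSS i (Gamma P (rscale t s)) (rscale (Gamma P t) s).
Proof.
move=> A g Hg; rewrite tsum_Gamma !tsum_rscale tsum_Gamma.
by apply: eq_bigr => p _; apply: eq_bigr => q _; rewrite mulrA.
Qed.

Lemma eps_Gamma t : eps (Gamma P t) = eps t.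
Proof.
rewrite /eps sum_Gamma; apply: eq_bigr => p _ /=; have [_ b1] := minvP HIl p.1.
by rewrite -{2}b1 /mult mulr_suml; apply: eq_bigr => q _; rewrite mulrA.
Qed.

(* Both sides reduce to sums of g3 a_k (x_k b_l) (y_l s'), with
   s = sum_k a_k x_k and 1 = sum_l b_l y_l; the inner sum over l collapses
   because S (x)_B P ~= S. *)
Lemma Gamma_Delta t : teq3SS i (Delta (Gamma P t)) (FF (Gamma P) (Delta t)).
Proof.
move=> A g3 [G1 G2 G3 G4 G5].
rewrite /tsum3 /Delta /Seta big_map sum_Gamma /FF big_flatten big_map big_map.
apply: eq_bigr => p _; rewrite big_allpairs_dep /= !sum_Gamma !big_seq1 /=.
have [a1 _] := minvP HIl p.1; have [c1 d1] := minvP HIl 1.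
apply: eq_big_seq => q /In_mem Hq; rewrite sum_Gamma big_seq1 /=.
have := @teqI_mult _ _ _ _ HIl _ (fun a x => g3 q.1 a (x * p.2))
   [seq (q.2 * 1 * w.1, w.2) | w <- minv P 1] [:: (1, q.2)].
rewrite /tsum big_map big_seq1 /= => <- //.
- by apply: inI_map => x Hx /=; apply: c1.
- exact: inI_seq1 (a1 _ Hq).
- transitivity (q.2 * mult (minv P 1)); last by rewrite d1 /mult big_seq1 mulr1 mul1r.
  by rewrite /mult big_map mulr_sumr; apply: eq_bigr => w _; rewrite mulr1 mulrA.
- by split=> *; [rewrite G2 | rewrite mulrDl G3 | rewrite G5 mulrA].
Qed.

Lemma Gamma_End : End_cor i (Gamma P).
Proof.
split; [exact: Gamma_teqSS | exact: Gamma_lscale | exact: Gamma_rscale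
       | exact: eps_Gamma | exact: Gamma_Delta].
Qed.

End GammaCoring.

Section GammaUnit.
Variables (B S : pzRingType) (i : {rmorphism B -> S}).

Lemma minv_unitI s : inI (unitI i) (minv (unitI i) s) /\ mult (minv (unitI i) s) = s.
Proof.
apply: (epsilon_spec (inhabits [::]) (fun t => inI (unitI i) t /\ mult t = s)).
exists [:: (s, i 1)]; split; first by apply: inI_seq1; exists 1.
by rewrite /mult big_seq1 /= rmorph1 mulr1.
Qed.

Lemma sum_unitI (A : zmodType) (g : S -> S -> A) u n : balancedSS i g ->
  inI (unitI i) u -> \sum_(q <- u) g q.1 (q.2 * n) = g (mult u) n.
Proof.
move=> Hg; have [H1 _ H3] := Hg.
elim: u => [|q u IH] Hu; first by rewrite big_nil /mult big_nil (balancedSS_0l Hg).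
have [[b Hb] Hu'] := proj1 (inI_cons _ _ _) Hu.
by rewrite big_cons IH // /mult big_cons H1 Hb H3.
Qed.

Lemma Gamma_unit : eqEnd i (Gamma (unitI i)) id.
Proof.
move=> t A g Hg; rewrite tsum_Gamma; apply: eq_bigr => p _ /=.
by have [H1 H2] := minv_unitI p.1; rewrite /Gamma_form sum_unitI // H2.
Qed.

End GammaUnit.

Section GammaProduct.
Variables (B S : pzRingType) (i : {rmorphism B -> S}).
Variables (P Q : S -> Prop) (HIP : in_Il i P) (HIQ : in_Il i Q).

Lemma minv_prodI s : inI (prodI P Q) (minv (prodI P Q) s) /\ mult (minv (prodI P Q) s) = s.
Proof.
apply: (epsilon_spec (inhabits [::]) (fun t => inI (prodI P Q) t /\ mult t = s)).
exists (flatten [seq [seq (c.1, c.2 * q.2) | c <- minv P q.1] | q <- minv Q s]).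
have [m1 m2] := minvP HIQ s; split.
  elim: (minv Q s) m1 => [_ ? []|q u IH Hu] /=.
  have [Hq {}/IH IH] := proj1 (inI_cons _ _ _) Hu; apply: inI_cat IH.
  apply: inI_map => c Hc /=; exists [:: (c.2, q.2)]; split; last by rewrite big_seq1.
  by move=> x [<-|[]] /=; split => //; apply: (proj1 (minvP HIP q.1)).
rewrite -[in RHS]m2 /mult big_flatten big_map; apply: eq_bigr => q _.
have [_ n2] := minvP HIP q.1.
by rewrite big_map -[in RHS]n2 /mult mulr_suml; apply: eq_bigr => c _; rewrite mulrA.
Qed.

Variables (A : zmodType) (g : S -> S -> A) (Hg : balancedSS i g) (c : S).

(* A representative in S (x)_B PQ is refactored into one in S (x)_B Q, along
   x y |-> x (x) y, on which g o Gamma(P) o Gamma(Q) is evaluated. *)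
Lemma prodI_refactor u : inI (prodI P Q) u ->
  exists v, [/\ inI Q v, mult v = mult u &
    \sum_(d <- u) g d.1 (d.2 * c) = tsum (fun w y => Gamma_form P g w (y * c)) v].
Proof.
elim: u => [|d u IH] Hu.
  by exists [::]; split=> //; rewrite /tsum !big_nil.
have [[e [He1 He2]] /IH [v [Hv1 Hv2 Hv3]]] := proj1 (inI_cons _ _ _) Hu.
exists ([seq (d.1 * x.1, x.2) | x <- e] ++ v); split.
- by apply: inI_cat => //; apply: inI_map => x /He1 [].
- rewrite mult_cat Hv2 /mult big_cons He2 mulr_sumr big_map; congr (_ + _).
  by apply: eq_bigr => x _; rewrite mulrA.
- rewrite big_cons tsum_cat Hv3 /tsum big_map; congr (_ + _).
  rewrite He2 mulr_suml (balancedSS_sumr Hg); apply: eq_big_seq => x /In_mem Hx /=.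
  rewrite (@Gamma_formE _ _ _ _ HIP _ _ Hg _ _ [:: (d.1, x.1)]).
  + by rewrite big_seq1 mulrA.
  + exact: inI_seq1 (proj1 (He1 x Hx)).
  + by rewrite /mult big_seq1.
Qed.

End GammaProduct.

Lemma Gamma_prod (B S : pzRingType) (i : {rmorphism B -> S}) (P Q : S -> Prop) :
  is_subbimod i P -> in_Il i P -> in_Il i Q ->
  eqEnd i (Gamma (prodI P Q)) (Gamma P \o Gamma Q).
Proof.
move=> HP HIP HIQ t A g Hg /=; rewrite tsum_Gamma !tsum_Gamma.
apply: eq_bigr => p _; rewrite {1}/Gamma_form; have [a1 a2] := minv_prodI HIP HIQ p.1.
have [v [Hv1 Hv2 ->]] := prodI_refactor HIP Hg p.2 a1.
have [b1 b2] := minvP HIQ p.1.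
apply: (teqI_mult HIQ) => //; first by rewrite Hv2 a2 b2.
have [K1 K2 K3] := balancedSS_Gamma_form HP HIP Hg.
by split=> *; [rewrite K1 | rewrite mulrDl K2 | rewrite K3 mulrA].
Qed.

Section CoringEndomorphism.
Variables (B S : pzRingType) (i : {rmorphism B -> S}).
Variables (F : seq (S * S) -> seq (S * S)) (HF : End_cor i F).
Variables (A : zmodType) (g : S -> S -> A) (Hg : balancedSS i g).

Lemma tsum_F_nil : tsum g (F [::]) = 0.
Proof.
have [_ H2 _ _ _] := HF; have := H2 1 [::] [::] A g Hg.
rewrite /= tsum_cat lscale1 => E.
by apply: (@addrI _ (tsum g (F [::]))); rewrite addr0 -E.
Qed.

Lemma tsum_F_cat t t' : tsum g (F (t ++ t')) = tsum g (F t) + tsum g (F t').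
Proof. by have [_ H2 _ _ _] := HF; rewrite -tsum_cat -(lscale1 (F t)) -H2 // lscale1. Qed.

Lemma tsum_F_lscale c t : tsum g (F (lscale c t)) = tsum g (lscale c (F t)).
Proof.
have [_ H2 _ _ _] := HF.
by have := H2 c t [::] A g Hg; rewrite cats0 tsum_cat tsum_F_nil addr0.
Qed.

Lemma tsum_F_teqSS t t' : teqSS i t t' -> tsum g (F t) = tsum g (F t').
Proof. by have [H1 _ _ _ _] := HF; move=> /H1; apply. Qed.

Lemma tsum_F_split t : tsum g (F t) = \sum_(p <- t) tsum g (F [:: p]).
Proof.
elim: t => [|p t IH]; first by rewrite big_nil tsum_F_nil.
by rewrite big_cons -IH -tsum_F_cat.
Qed.

Definition Fform s := tsum g (F [:: (s, 1)]).

Lemma FformD s s' : Fform (s + s') = Fform s + Fform s'.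
Proof.
rewrite /Fform -tsum_F_cat; apply: tsum_F_teqSS => A' h [H1 _ _].
by rewrite /tsum /= !big_cons !big_nil /= H1 !addr0.
Qed.

Lemma Fform0 : Fform 0 = 0.
Proof.
have E := FformD 0 0; rewrite addr0 in E.
by apply: (@addrI _ (Fform 0)); rewrite addr0 -E.
Qed.

Lemma FformN s : Fform (- s) = - Fform s.
Proof. by apply/eqP; rewrite -addr_eq0 -FformD addNr Fform0. Qed.

End CoringEndomorphism.

Section IdealOfEndomorphism.
Variables (B S : pzRingType) (i : {rmorphism B -> S}).
Variables (F : seq (S * S) -> seq (S * S)) (HF : End_cor i F).

Lemma FformMl (A : zmodType) (g : S -> S -> A) c s : balancedSS i g ->
  Fform F g (c * s) = Fform F (fun m n => g (c * m) n) s.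
Proof. by move=> Hg; rewrite /Fform -tsum_lscale -(tsum_F_lscale HF Hg). Qed.

Lemma tsum_F_seq1 (A : zmodType) (g : S -> S -> A) s c : balancedSS i g ->
  tsum g (F [:: (s, c)]) = Fform F (fun m n => g m (n * c)) s.
Proof.
move=> Hg; have [_ _ H3 _ _] := HF.
rewrite /Fform -tsum_rscale -(H3 _ _ _ _ Hg); apply: (tsum_F_teqSS HF Hg) => A' h _.
by rewrite /= !tsum_seq1 /= mul1r.
Qed.

Definition ideal_of (s : S) : Prop := teqSS i (F [:: (s, 1)]) [:: (1, s)].

Lemma ideal_ofP s : ideal_of s <->
  forall (A : zmodType) (g : S -> S -> A), balancedSS i g -> Fform F g s = g 1 s.
Proof.
split => H A g Hg; first by rewrite /Fform (H A g Hg) tsum_seq1.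
by rewrite tsum_seq1 -(H A g Hg).
Qed.

Lemma ideal_of_subbimod : is_subbimod i ideal_of.
Proof.
split.
- by apply/ideal_ofP => A g Hg; rewrite (Fform0 HF Hg) (balancedSS_0r Hg).
- move=> x y /ideal_ofP Hx /ideal_ofP Hy; apply/ideal_ofP => A g Hg.
  by rewrite (FformD HF Hg) Hx // Hy //; have [_ H2 _] := Hg; rewrite H2.
- move=> x /ideal_ofP Hx; apply/ideal_ofP => A g Hg.
  rewrite (FformN HF Hg) Hx //; apply/eqP; rewrite eq_sym -addr_eq0.
  by have [_ H2 _] := Hg; rewrite -H2 addNr (balancedSS_0r Hg).
- move=> b x /ideal_ofP Hx; apply/ideal_ofP => A g Hg.
  rewrite FformMl // Hx ?mulr1; last exact: balancedSS_lmul.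
  by have [_ _ H3] := Hg; rewrite -[i b]mul1r H3 mul1r.
- move=> b x /ideal_ofP Hx; apply/ideal_ofP => A g Hg.
  have -> : Fform F g (x * i b) = tsum g (F [:: (x, i b)]).
    apply: (tsum_F_teqSS HF Hg) => A' h [_ _ H3].
    by rewrite !tsum_seq1 /= H3 mulr1.
  by rewrite tsum_F_seq1 // Hx //; exact: balancedSS_rmul.
Qed.

Lemma Fform_mult (A : zmodType) (g : S -> S -> A) u : balancedSS i g ->
  inI ideal_of u -> Fform F g (mult u) = \sum_(q <- u) g q.1 q.2.
Proof.
move=> Hg; elim: u => [|q u IH] Hu; first by rewrite /mult !big_nil (Fform0 HF Hg).
have [Hq Hu'] := proj1 (inI_cons _ q u) Hu.
rewrite /mult big_cons (FformD HF Hg) -/(mult u) IH // big_cons; congr (_ + _).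
by rewrite FformMl // (proj1 (ideal_ofP _) Hq) ?mulr1 //; exact: balancedSS_lmul.
Qed.

Definition coaction : S^o -> seq (S * S^o) := fun s => F [:: (s, 1)].

Lemma coaction_comodule : is_comodule i coaction.
Proof.
have [_ _ _ HF4 HF5] := HF; split.
- move=> s y z A g Hg; rewrite tsum_cat /coaction.
  rewrite -/(Fform F g (s * y + z)) (FformD HF Hg) (FformMl s y Hg).
  by rewrite /Fform tsum_lscale.
- move=> y; rewrite /alpha /coaction.
  have E := HF4 [:: (y, 1)]; rewrite /eps big_seq1 /= mulr1 in E.
  by rewrite -[in RHS]E.
- move=> y A g3 Hg3; have [G1 G2 G3 G4 G5] := Hg3.
  rewrite [RHS](HF5 [:: (y, 1)] A g3 Hg3).
  rewrite /tsum3 /Stheta /FF /Delta /Seta /= big_flatten big_map /= cats0.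
  rewrite big_allpairs_dep /=; apply: eq_bigr => p _; rewrite big_map.
  have Hb : balancedSS i (g3 p.1) by split=> *; [rewrite G2 | rewrite G3 | rewrite G5].
  have := tsum_F_lscale HF Hb p.2 [:: (1, 1)]; rewrite /= mulr1 /tsum /= big_map.
  by move=> ->.
Qed.

End IdealOfEndomorphism.

Section Coinvariants.
Variables (B S : pzRingType) (i : {rmorphism B -> S}) (X : lmodType B).

Definition coinvariant (t0 : seq (S * X)) : Prop :=
  teq3X i (Seta t0) [seq (1, q.1, q.2) | q <- t0].

(* The map S = S (x)_B B -> S (x)_B X, s |-> s t0. *)
Definition lscale_by (t0 : seq (S * X)) (t : seq (S * B^o)) : seq (S * X) :=
  flatten [seq lscale (p.1 * i p.2) t0 | p <- t].

Lemma tsum_lscale_by (A : zmodType) (h : S -> X -> A) t0 t :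
  tsum h (lscale_by t0 t) = \sum_(p <- t) tsum h (lscale (p.1 * i p.2) t0).
Proof. by rewrite /tsum /lscale_by big_flatten big_map. Qed.

Lemma KK_morph_lscale_by t0 : coinvariant t0 -> KK_morph i (lscale_by t0).
Proof.
move=> Hco; split.
- move=> t1 t2 H A h [H1 H2 H3]; rewrite !tsum_lscale_by.
  apply: (H A (fun a (b : B^o) => tsum h (lscale (a * i b) t0))).
  split=> [m1 m2 n|m n1 n2|m r n]; rewrite !tsum_lscale /tsum.
  + by rewrite -big_split; apply: eq_bigr => q _; rewrite /= !mulrDl H1.
  + by rewrite -big_split; apply: eq_bigr => q _; rewrite /= rmorphD mulrDr !mulrDl H1.
  + apply: eq_bigr => q _; rewrite /= /rS.
    by change (r *: n) with (r * n); rewrite rmorphM !mulrA.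
- move=> s t t' A h Hh.
  rewrite /lscale_by map_cat flatten_cat !tsum_cat; congr (_ + _).
  rewrite tsum_lscale -/(lscale_by t0 t) !tsum_lscale_by /lscale big_map.
  by apply: eq_bigr => p _; rewrite /tsum !big_map; apply: eq_bigr => q _; rewrite /= !mulrA.
- move=> t A g3 [G1 G2 G3 G4 G5].
  rewrite /tsum3 /SG /Seta !big_map big_flatten big_map /lscale_by big_flatten !big_map.
  apply: eq_bigr => p _; rewrite /= cats0 !big_map /=.
  pose c := p.1 * i p.2.
  have := Hco A (fun a u x => g3 (c * a) u x); rewrite /tsum3 !big_map /= => ->.
    by apply: eq_bigr => q _; rewrite mulr1 /c G4 mul1r.
  by split=> *; [rewrite mulrDr G1 | rewrite G2 | rewrite G3 | rewrite mulrA G4 | rewrite G5].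
Qed.

End Coinvariants.

Section EssentialImage.
Variables (B S : pzRingType) (i : {rmorphism B -> S}).
Variables (F : seq (S * S) -> seq (S * S)) (HF : End_cor i F).
Variables (X : lmodType B) (psi : seq (S * X) -> S^o).
Hypothesis Hpsi : KY_iso i (coaction F) psi.

Definition psi1 (x : X) : S := psi [:: (1, x)].

Lemma psi_nil : psi [::] = 0.
Proof.
have [_ K2 _ _ _] := Hpsi; have E := K2 1 [::] [::]; rewrite /= scale1r in E.
by apply: (@addrI _ (psi [::])); rewrite addr0 -E.
Qed.

Lemma psi_cons p t : (psi (p :: t) : S) = p.1 * psi1 p.2 + psi t.
Proof.
have [_ K2 _ _ _] := Hpsi; case: p => a x.
by have := K2 a [:: (1, x)] t; rewrite /lscale /= mulr1 => ->.
Qed.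

Lemma psi_sum t : (psi t : S) = \sum_(p <- t) p.1 * psi1 p.2.
Proof.
elim: t => [|p t IH]; first by rewrite psi_nil big_nil.
by rewrite psi_cons IH big_cons.
Qed.

Lemma psi1D x y : psi1 (x + y) = psi1 x + psi1 y.
Proof.
have [K1 _ _ _ _] := Hpsi.
have -> : psi1 (x + y) = psi [:: (1, x); (1, y)].
  by apply: K1 => A f [_ H2 _]; rewrite /tsum !big_cons !big_nil /= H2 !addr0.
by rewrite !psi_cons psi_nil /= !mul1r addr0.
Qed.

Lemma psi1Z b x : psi1 (b *: x) = i b * psi1 x.
Proof.
have [K1 _ _ _ _] := Hpsi.
have -> : psi1 (b *: x) = psi [:: (i b, x)].
  by apply: K1 => A f [_ _ H3]; rewrite /tsum !big_cons !big_nil /= -H3 /rS mul1r.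
by rewrite psi_cons psi_nil /= addr0.
Qed.

Lemma psi1_ideal x : ideal_of i F (psi1 x).
Proof. by have [_ _ K3 _ _] := Hpsi; apply: (K3 [:: (1, x)]). Qed.

Definition psi_rep (s : S) : seq (S * X) :=
  epsilon (inhabits [::]) (fun t => psi t = s).

Lemma psi_repK s : psi (psi_rep s) = s.
Proof.
have [_ _ _ _ K5] := Hpsi.
exact: (epsilon_spec (inhabits [::]) (fun t => psi t = s) (K5 s)).
Qed.

(* Transport the coinvariance of s in S (given by s in I_F) along psi. *)
Lemma coinvariant_psi_ideal s t0 : ideal_of i F s -> psi t0 = s -> coinvariant i t0.
Proof.
move=> Ps Ht0 A g3 Hg3; have [G1 G2 G3 G4 G5] := Hg3.
have [K1 K2 K3 K4 K5] := Hpsi.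
pose g a s := \sum_(q <- psi_rep s) g3 a q.1 q.2.
have gpsi a t : g a (psi t) = \sum_(q <- t) g3 a q.1 q.2.
  apply: (K4 _ _ (psi_repK (psi t)) A (g3 a)).
  by split=> *; [rewrite G2 | rewrite G3 | rewrite G5].
have gbal : balancedSS i g.
  split=> [m1 m2 n|m n1 n2|m r n].
  - by rewrite /g -big_split; apply: eq_bigr => q _; rewrite G1.
  - have E : (psi (psi_rep n1 ++ psi_rep n2) : S) = n1 + n2.
      by have := K2 1 (psi_rep n1) (psi_rep n2); rewrite lscale1 => ->; rewrite !psi_repK scale1r.
    by rewrite -E gpsi big_cat.
  - have E : (psi (lscale (i r) (psi_rep n) ++ [::]) : S) = i r * n.
      by rewrite K2 psi_nil psi_repK; apply: addr0.
    rewrite -E gpsi cats0 /lscale big_map /g.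
    by apply: eq_bigr => q _; rewrite G4.
have E1 := K3 t0 A g gbal; rewrite Ht0 /coaction (Ps A g gbal) tsum_seq1 /= in E1.
rewrite -{1}Ht0 gpsi in E1.
rewrite /tsum3 !big_map /= E1 /tsum big_map; apply: eq_bigr => q _ /=.
by rewrite gpsi big_seq1.
Qed.

Hypothesis Hfull : forall (X X' : lmodType B) (G : seq (S * X) -> seq (S * X')),
  KK_morph i G -> exists f : X -> X', linear f /\ forall t, teqX i (G t) (tmap f t).

(* Fullness turns s |-> s t0 into S (x) f for some f : B -> X; then s = psi1 (f 1). *)
Lemma ideal_of_psi1 s : ideal_of i F s -> exists x, s = psi1 x.
Proof.
move=> Ps; have [K1 K2 _ _ K5] := Hpsi; have [t0 Ht0] := K5 s.
have [f [_ Hf]] := Hfull (KK_morph_lscale_by (coinvariant_psi_ideal Ps Ht0)).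
exists (f 1); rewrite /psi1 -(K1 _ _ (Hf [:: (1, 1)])) /lscale_by /= K2.
by rewrite rmorph1 mul1r scale1r psi_nil Ht0 addr0.
Qed.

Lemma in_Il_ideal_of : in_Il i (ideal_of i F).
Proof.
have [_ _ _ K4 K5] := Hpsi.
have lift t : inI (ideal_of i F) t -> exists u, t = [seq (p.1, psi1 p.2) | p <- u].
  elim: t => [|[a y] t IH] Ht; first by exists [::].
  have [Hy /IH [u ->]] := proj1 (inI_cons _ _ _) Ht.
  by have [x /= ->] := ideal_of_psi1 Hy; exists ((a, x) :: u).
split.
- move=> t1 t2 /lift [u1 ->] /lift [u2 ->] Hm A f [F1 F2 F3].
  have Hu : psi u1 = psi u2 by rewrite !psi_sum; move: Hm; rewrite /mult !big_map.
  rewrite /tsum !big_map; apply: (K4 _ _ Hu A (fun a x => f a (psi1 x))).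
  split=> *; [ by rewrite F1 //; apply: psi1_ideal
             | by rewrite psi1D F2 //; apply: psi1_ideal
             | by rewrite F3 ?psi1Z //; apply: psi1_ideal].
- move=> s; have [t <-] := K5 s; exists [seq (p.1, psi1 p.2) | p <- t].
  split; first by apply: inI_map => x _; apply: psi1_ideal.
  by rewrite psi_sum /mult big_map.
Qed.

Lemma Gamma_ideal_of : eqEnd i (Gamma (ideal_of i F)) F.
Proof.
move=> t A g Hg; rewrite tsum_Gamma (tsum_F_split HF Hg); apply: eq_bigr => [[a b]] _ /=.
rewrite (tsum_F_seq1 HF _ _ Hg); have [m1 m2] := minvP in_Il_ideal_of a.
by rewrite -[in RHS]m2 (Fform_mult HF) //; apply: balancedSS_rmul.
Qed.

End EssentialImage.

Definition quot (B S : pzRingType) (i : {rmorphism B -> S}) (Q : S -> Prop)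
  (HQ : is_subbimod i Q) := {C : S -> Prop | exists s, C = fun y => Q (y - s)}.

HB.instance Definition _ B S i Q HQ := boolp.gen_eqMixin (@quot B S i Q HQ).
HB.instance Definition _ B S i Q HQ := boolp.gen_choiceMixin (@quot B S i Q HQ).

Section Quotient.
Variables (B S : pzRingType) (i : {rmorphism B -> S}) (Q : S -> Prop).
Hypothesis HQ : is_subbimod i Q.
Local Notation quot := (@quot B S i Q HQ).

Definition qclass (s : S) : quot := exist _ (fun y => Q (y - s)) (ex_intro _ s erefl).

Lemma qclass_eq s s' : Q (s - s') -> qclass s = qclass s'.
Proof.
move=> H; rewrite /qclass.
have E : (fun y => Q (y - s)) = (fun y => Q (y - s')).
  apply: functional_extensionality => y; apply: propositional_extensionality.
  split=> Hy; first by have := subbimodD HQ Hy H; rewrite addrA subrK.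
  by have := subbimodD HQ Hy (subbimodN HQ H); rewrite opprB addrA subrK.
move: (ex_intro _ s _) (ex_intro _ s' _); rewrite E => p1 p2.
by rewrite (proof_irrelevance _ p1 p2).
Qed.

Lemma qclass_inj s s' : qclass s = qclass s' -> Q (s - s').
Proof.
move=> /(f_equal (@proj1_sig _ _)) /= /(f_equal (fun C => C s)).
by rewrite /= subrr => <-; apply: subbimod0 HQ.
Qed.

Lemma qclass_surj (q : quot) : exists s, q = qclass s.
Proof.
case: q => C [s E]; exists s; rewrite /qclass; move: (ex_intro _ s _) => p.
by subst C; rewrite (proof_irrelevance _ p (ex_intro _ s erefl)).
Qed.

Definition qrep (q : quot) : S := epsilon (inhabits 0) (fun s => q = qclass s).

Lemma qrepK s : Q (qrep (qclass s) - s).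
Proof.
apply: qclass_inj; symmetry.
exact: (epsilon_spec (inhabits 0) (fun s' => qclass s = qclass s') (qclass_surj _)).
Qed.

Definition qadd (q q' : quot) := qclass (qrep q + qrep q').
Definition qopp (q : quot) := qclass (- qrep q).
Definition qscale (b : B) (q : quot) := qclass (i b * qrep q).

Lemma qaddE s t : qadd (qclass s) (qclass t) = qclass (s + t).
Proof.
by apply: qclass_eq; have := subbimodD HQ (qrepK s) (qrepK t); rewrite opprD addrACA.
Qed.

Lemma qoppE s : qopp (qclass s) = qclass (- s).
Proof. by apply: qclass_eq; have := subbimodN HQ (qrepK s); rewrite opprB opprK addrC. Qed.

Lemma qscaleE b s : qscale b (qclass s) = qclass (i b * s).
Proof. by apply: qclass_eq; have := subbimodMl HQ b (qrepK s); rewrite mulrBr. Qed.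

Lemma qaddA : associative qadd.
Proof.
move=> x y z; case: (qclass_surj x) => a ->; case: (qclass_surj y) => b ->.
by case: (qclass_surj z) => c ->; rewrite !qaddE addrA.
Qed.

Lemma qaddC : commutative qadd.
Proof.
move=> x y; case: (qclass_surj x) => a ->; case: (qclass_surj y) => b ->.
by rewrite !qaddE addrC.
Qed.

Lemma qadd0 : left_id (qclass 0) qadd.
Proof. by move=> x; case: (qclass_surj x) => a ->; rewrite qaddE add0r. Qed.

Lemma qaddN : left_inverse (qclass 0) qopp qadd.
Proof. by move=> x; case: (qclass_surj x) => a ->; rewrite qoppE qaddE addNr. Qed.

HB.instance Definition _ := GRing.isZmodule.Build quot qaddA qaddC qadd0 qaddN.

Lemma qclass0 : qclass 0 = 0. Proof. by []. Qed.

Lemma qclassD s t : qclass (s + t) = qclass s + qclass t.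
Proof. by rewrite -qaddE. Qed.

Lemma qscaleA a b v : qscale a (qscale b v) = qscale (a * b) v.
Proof. by case: (qclass_surj v) => s ->; rewrite !qscaleE mulrA rmorphM. Qed.

Lemma qscale1 : left_id 1 qscale.
Proof. by move=> v; case: (qclass_surj v) => s ->; rewrite qscaleE rmorph1 mul1r. Qed.

Lemma qscaleDr : right_distributive qscale +%R.
Proof.
move=> a u v; case: (qclass_surj u) => s ->; case: (qclass_surj v) => t ->.
by rewrite -qclassD !qscaleE -qclassD mulrDr.
Qed.

Lemma qscaleDl v : {morph qscale^~ v : a b / a + b}.
Proof.
move=> a b; case: (qclass_surj v) => s ->.
by rewrite !qscaleE -qclassD rmorphD mulrDl.
Qed.

HB.instance Definition _ :=
  GRing.Zmodule_isLmodule.Build B quot qscaleA qscale1 qscaleDr qscaleDl.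

Lemma qclassMl b s : qclass (i b * s) = b *: qclass s.
Proof. by rewrite -qscaleE. Qed.

End Quotient.

Section Injectivity.
Variables (B S : pzRingType) (i : {rmorphism B -> S}).

Lemma Gamma_fix (P : S -> Prop) x : in_Il i P -> P x ->
  teqSS i (Gamma P [:: (x, 1)]) [:: (1, x)].
Proof.
move=> HIl Px A g Hg; rewrite tsum_Gamma !tsum_seq1 /=.
rewrite (Gamma_formE HIl Hg _ (u := [:: (1, x)])) ?big_seq1 /= ?mulr1 //.
  exact: inI_seq1.
by rewrite /mult big_seq1 mul1r.
Qed.

Variables (Q : S -> Prop) (HQ : is_subbimod i Q) (HIQ : in_Il i Q).

Definition qmul (x : S) (b : B^o) : quot HQ := qclass HQ (i b * x).

Lemma linear_qmul x : linear (qmul x).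
Proof. by move=> a u v; rewrite /qmul rmorphD rmorphM mulrDl -mulrA qclassD qclassMl. Qed.

(* If Gamma(Q) fixes x (x) 1, then 1 (x) [x] = 0 in S (x)_B S/Q, since
   Gamma(Q)(x (x) 1) lies in the image of S (x)_B Q. *)
Lemma tmap_qmul_eq0 x : teqSS i (Gamma Q [:: (x, 1)]) [:: (1, x)] ->
  forall t, teqX i (tmap (qmul x) t) (tmap (fun=> 0) t).
Proof.
move=> Hx t A h [H1 H2 H3].
have h0 m : h m 0 = 0.
  have E := H2 m 0 0; rewrite addr0 in E.
  by apply: (@addrI _ (h m 0)); rewrite addr0 -E.
have hx a : h a (qclass HQ x) = 0.
  pose h' m n := h m (qclass HQ n).
  have Hh' : balancedSS i h'.
    split=> [m1 m2 n|m n1 n2|m r n]; rewrite /h'; first by rewrite H1.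
      by rewrite qclassD H2.
    by rewrite qclassMl -H3.
  have := teqSS_lscale a Hx Hh'; rewrite !tsum_lscale tsum_Gamma !tsum_seq1 /=.
  rewrite /Gamma_form /h' mulr1 => <-.
  apply: big1_seq => q /In_mem Hq /=.
  have Qq : Q q.2 by apply: (proj1 (minvP HIQ x)).
  by rewrite mulr1 (@qclass_eq _ _ _ _ HQ q.2 0) ?subr0 // h0.
rewrite /tsum /tmap !big_map big1 ?big1 // => p _ /=; rewrite ?h0 //.
by rewrite /qmul qclassMl -H3 hx.
Qed.

Hypothesis Hfaith : forall (X X' : lmodType B) (f g : X -> X'), linear f -> linear g ->
  (forall t, teqX i (tmap f t) (tmap g t)) -> f =1 g.

Lemma mem_of_Gamma_fix x : teqSS i (Gamma Q [:: (x, 1)]) [:: (1, x)] -> Q x.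
Proof.
move=> Hx; have lin0 : linear (fun _ : B^o => 0 : quot HQ) by move=> a u v; rewrite scaler0 addr0.
have := Hfaith (linear_qmul x) lin0 (tmap_qmul_eq0 Hx) 1.
by rewrite /qmul rmorph1 mul1r -qclass0 => /qclass_inj; rewrite subr0.
Qed.

End Injectivity.

Theorem theorem3p5 (B S : pzRingType) (i : {rmorphism B -> S}) :
  comonadic i ->
  [/\ forall P, is_subbimod i P -> in_Il i P -> End_cor i (Gamma P),
      eqEnd i (Gamma (unitI i)) id,
      forall P Q, is_subbimod i P -> in_Il i P -> is_subbimod i Q -> in_Il i Q ->
        eqEnd i (Gamma (prodI P Q)) (Gamma P \o Gamma Q),
      forall P Q, is_subbimod i P -> in_Il i P -> is_subbimod i Q -> in_Il i Q ->
        eqEnd i (Gamma P) (Gamma Q) -> forall x, P x <-> Q x &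
      forall F, End_cor i F ->
        exists P, [/\ is_subbimod i P, in_Il i P & eqEnd i (Gamma P) F]].
Proof.
case=> Hfaith Hfull Hess; split.
- by move=> P HP HIl; apply: Gamma_End.
- exact: Gamma_unit.
- by move=> P Q HP HIP _ HIQ; apply: Gamma_prod.
- move=> P Q HP HIP HQ HIQ HPQ x; split=> Hx.
    apply: (mem_of_Gamma_fix HQ HIQ Hfaith).
    exact: teqSS_trans (teqSS_sym (HPQ _)) (Gamma_fix HIP Hx).
  apply: (mem_of_Gamma_fix HP HIP Hfaith).
  exact: teqSS_trans (HPQ _) (Gamma_fix HIQ Hx).
- move=> F HF; have [X [psi Hpsi]] := Hess _ _ (coaction_comodule HF).
  exists (ideal_of i F); split; first exact: ideal_of_subbimod.
    exact: in_Il_ideal_of Hpsi Hfull.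
  exact: (Gamma_ideal_of HF Hpsi Hfull).
Qed.
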